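(* Let $A,B,C,D$ be finite-dimensional Hilbert spaces with $|A||B|=|C||D|$, let $U_{AB\to CD}$ be a maximally $I_3$-scrambling unitary, i.e. $I_3=-2\log\min\{|A|,|B|,|C|,|D|\}$ on its Choi state $\rho_{ABCD}$. If $A$ or $C$ has the smallest dimension among the four subsystems, then $\rho_{AC}$ is maximally mixed and $I(A;C)=0$. As a consequence, the residual channel $\mathcal N_{A\to C}[\sigma_A]=\mathrm{tr}_D[U(\sigma_A\otimes\tau_B)U^\dagger]$ is completely depolarizing, i.e. $\mathcal N_{A\to C}[\sigma_A]=\tau_C$ for every state $\sigma_A$.
   Context: $|X|$ denotes dimension and $\tau_X$ the maximally mixed state on $X$. The Choi state of $U_{AB\to CD}$ is $\rho_{ABCD}=U_{A'B'\to CD}(\Phi^+_{AA'}\otimes\Phi^+_{BB'})U^\dagger$ with $\Phi^+_{XX'}=|X|^{-1/2}\sum_i|ii\rangle$. Entropies are von Neumann with base-2 logarithms, $I(X;Y)=S(X)+S(Y)-S(XY)$, and the tripartite information is $I_3=I_3(A;C;D)=I(A;C)+I(A;D)-I(A;CD)$ evaluated on the Choi state. *)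

From HB Require Import structures.
From mathcomp Require Import all_boot all_order all_algebra.
From mathcomp Require Import reals exp.
From mathcomp.real_closed Require Import complex.

Set Implicit Arguments.
Unset Strict Implicit.
Unset Printing Implicit Defensive.

Import Order.TTheory GRing.Theory Num.Theory.
Local Open Scope ring_scope.

Section QInfo.
Variable R : realType.
Local Notation C := R[i].

Definition op (T : finType) := T -> T -> C.

Definition mx_of (T : finType) (X : op T) : 'M[C]_#|T| :=
  \matrix_(i, j) X (enum_val i) (enum_val j).

(* eigenvalues (with algebraic multiplicity) = roots of the characteristic
   polynomial, which splits since R[i] is algebraically closed *)
Definition eigenvalues (n : nat) (M : 'M[C]_n) : seq C :=
  sval (closed_field_poly_normal (char_poly M)).

Definition log2 (x : R) : R := ln x / ln 2.

Definition xlog2x (x : R) : R := if x == 0 then 0 else x * log2 x.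

(* von Neumann entropy S(rho) = - tr rho log2 rho = - sum_lambda lambda log2 lambda
   (eigenvalues of a density operator are real, so we take real parts) *)
Definition entropy (T : finType) (rho : op T) : R :=
  - \sum_(l <- eigenvalues (mx_of rho)) xlog2x (complex.Re l).

Definition ptrace (T K : finType) (rho : op (T * K)%type) : op T :=
  fun t t' => \sum_(k : K) rho (t, k) (t', k).

Definition relabel (T T' : finType) (f : T' -> T) (rho : op T) : op T' :=
  fun x y => rho (f x) (f y).

Definition tensor_op (T K : finType) (X : op T) (Y : op K) : op (T * K)%type :=
  fun p q => X p.1 q.1 * Y p.2 q.2.

Definition maxmixed (T : finType) : op T :=
  fun t t' => (t == t')%:R / #|T|%:R.

Definition conj_by (T K : finType) (U : K -> T -> C) (X : op T) : op K :=
  fun k k' => \sum_(t : T) \sum_(t' : T) U k t * X t t' * (U k' t')^*.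

Definition unitary (T K : finType) (U : K -> T -> C) : Prop :=
  (forall t t' : T, \sum_(k : K) (U k t)^* * U k t' = (t == t')%:R) /\
  (forall k k' : K, \sum_(t : T) U k t * (U k' t)^* = (k == k')%:R).

Definition density (T : finType) (s : op T) : Prop :=
  (forall v : T -> C, 0 <= \sum_(t : T) \sum_(t' : T) (v t)^* * s t t' * v t') /\
  \sum_(t : T) s t t = 1.

Definition Phi (n : nat) : 'I_n * 'I_n -> C :=
  fun p => (p.1 == p.2)%:R / sqrtC n%:R.

Section Choi.
Variables a b c d : nat.
Variable U : ('I_c * 'I_d) -> ('I_a * 'I_b) -> C.

(* Choi vector: (1_{AB} (x) U_{A'B' -> CD}) (|Phi+_{AA'}> (x) |Phi+_{BB'}>),
   as a vector on A (x) B (x) C (x) D *)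
Definition choi_vec (x : 'I_a * 'I_b * 'I_c * 'I_d) : C :=
  let: (al, be, ga, de) := x in
  \sum_(al' : 'I_a) \sum_(be' : 'I_b)
     U (ga, de) (al', be') * (Phi (n:=a) (al, al') * Phi (n:=b) (be, be')).

Definition choi (x y : 'I_a * 'I_b * 'I_c * 'I_d) : C :=
  choi_vec x * (choi_vec y)^*.

Definition rho_A : op 'I_a :=
  ptrace (relabel (fun p : 'I_a * ('I_b * 'I_c * 'I_d) =>
            let: (al, (be, ga, de)) := p in (al, be, ga, de)) choi).
Definition rho_C : op 'I_c :=
  ptrace (relabel (fun p : 'I_c * ('I_a * 'I_b * 'I_d) =>
            let: (ga, (al, be, de)) := p in (al, be, ga, de)) choi).
Definition rho_D : op 'I_d :=
  ptrace (relabel (fun p : 'I_d * ('I_a * 'I_b * 'I_c) =>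
            let: (de, (al, be, ga)) := p in (al, be, ga, de)) choi).
Definition rho_AC : op (('I_a * 'I_c)%type) :=
  ptrace (relabel (fun p : ('I_a * 'I_c) * ('I_b * 'I_d) =>
            let: ((al, ga), (be, de)) := p in (al, be, ga, de)) choi).
Definition rho_AD : op (('I_a * 'I_d)%type) :=
  ptrace (relabel (fun p : ('I_a * 'I_d) * ('I_b * 'I_c) =>
            let: ((al, de), (be, ga)) := p in (al, be, ga, de)) choi).
Definition rho_CD : op (('I_c * 'I_d)%type) :=
  ptrace (relabel (fun p : ('I_c * 'I_d) * ('I_a * 'I_b) =>
            let: ((ga, de), (al, be)) := p in (al, be, ga, de)) choi).
Definition rho_ACD : op (('I_a * ('I_c * 'I_d))%type) :=
  ptrace (relabel (fun p : ('I_a * ('I_c * 'I_d)) * 'I_b =>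
            let: ((al, (ga, de)), be) := p in (al, be, ga, de)) choi).

Definition I_AC : R := entropy rho_A + entropy rho_C - entropy rho_AC.
Definition I_AD : R := entropy rho_A + entropy rho_D - entropy rho_AD.
Definition I_ACD : R := entropy rho_A + entropy rho_CD - entropy rho_ACD.

Definition I3 : R := I_AC + I_AD - I_ACD.

Definition residual_channel (sigma : op 'I_a) : op 'I_c :=
  ptrace (conj_by U (tensor_op sigma (maxmixed (T:='I_b)))).

End Choi.
End QInfo.

Arguments maxmixed {R} T _ _.

(* Since U is unitary, the Choi state is pure, its marginals on A, C, D and CD are
   maximally mixed, and its marginal on ACD has the nonzero spectrum of tau_B; hence
   I3 = log|A| + log|B| - S(AC) - S(AD).  The entropy of a state is at most the log of
   its rank, and a marginal of a pure state has rank at most the dimension of the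
   complementary system, so S(AD) <= log|A||D| and S(AD) <= log|B||C|.  When |A|
   (resp. |C|) is the smallest dimension, the first (resp. second) bound and
   I3 = -2 log min force S(AC) >= log|A||C|, the maximal value, which by the equality
   case of Gibbs' inequality is attained only by tau_AC.  Finally
   N[sigma](g, g') = |A| sum_(a, a') sigma(a, a') rho_AC((a, g), (a', g')), which is
   tr(sigma) tau_C when rho_AC = tau_AC. *)

From HB Require Import structures.
From mathcomp Require Import all_boot all_order all_algebra.
From mathcomp Require Import reals exp.
From mathcomp.real_closed Require Import complex.
From mathcomp Require Import ring lra.
From Stdlib Require Import FunctionalExtensionality.
Import Order.TTheory GRing.Theory Num.Theory.
Set Implicit Arguments.
Unset Strict Implicit.
Unset Printing Implicit Defensive.
Local Open Scope ring_scope.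
Local Open Scope sesquilinear_scope.

Lemma sum_mul_delta (S : pzSemiRingType) (T : finType) (x : T) (F : T -> S) :
  \sum_i F i * (x == i)%:R = F x.
Proof.
rewrite (bigD1 x) //= eqxx mulr1 big1 ?addr0 // => i i_neq_x.
by rewrite eq_sym (negbTE i_neq_x) mulr0.
Qed.

Lemma sum_pair (S : nmodType) (T K : finType) (F : T * K -> S) :
  \sum_p F p = \sum_t \sum_k F (t, k).
Proof. by rewrite pair_bigA; apply: eq_bigr => -[]. Qed.

Lemma sum_enum_val (V : nmodType) (T : finType) (F : T -> V) :
  \sum_(i < #|T|) F (enum_val i) = \sum_t F t.
Proof. by rewrite -(big_enum_val (A := T)); apply: eq_bigl => t; rewrite inE. Qed.

Section ShannonEntropy.
Variable R : realType.

Lemma ln2_gt0 : 0 < ln (2 : R).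
Proof. by apply: ln_gt0; lra. Qed.

Lemma xlog2xE (x : R) : xlog2x x = x * log2 x.
Proof. by rewrite /xlog2x; case: eqP => [->|]; rewrite ?mul0r. Qed.

Lemma ln_le_subr1 (t : R) : 0 < t -> ln t <= t - 1 ?= iff (t == 1).
Proof.
move=> t_gt0; split; first by have := expR_ge1Dx (ln t); rewrite lnK ?posrE //; lra.
have [->|t_neq1] := eqVneq t 1; first by rewrite ln1 subrr eqxx.
have ln_neq0 : ln t != 0 by rewrite ln_eq0.
have := expR_gt1Dx ln_neq0; rewrite lnK ?posrE // => lt_t.
by apply: lt_eqF; lra.
Qed.

Lemma xlnx_gibbs (x y : R) : 0 <= x -> 0 < y ->
  x * ln y - x * ln x <= y - x ?= iff (x == y).
Proof.
rewrite le0r => /orP[/eqP->|x_gt0] y_gt0.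
  by rewrite !mul0r subrr subr0; split; [exact: ltW | rewrite eq_sym !gt_eqF].
have -> : x * ln y - x * ln x = x * ln (y / x).
  by rewrite lnM ?posrE ?invr_gt0 // lnV ?posrE //; ring.
have -> : y - x = x * (y / x - 1) by field; rewrite gt_eqF.
have -> : (x == y) = (y / x == 1).
  apply/eqP/eqP => [<-|yx1]; first by rewrite divff // gt_eqF.
  by rewrite -[RHS](divfK (lt0r_neq0 x_gt0) y) yx1 mul1r.
by rewrite (mono_leif (ler_pM2l x_gt0)); apply/ln_le_subr1/divr_gt0.
Qed.

Lemma xlnx_gibbs_support (x y : R) : 0 <= x -> 0 < y ->
  x * ln y - x * ln x <= (x != 0)%:R * y - x.
Proof.
have [->|x_neq0] := eqVneq x 0; first by rewrite !mul0r !subrr.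
by move=> x_ge0 y_gt0; rewrite mul1r; have [] := xlnx_gibbs x_ge0 y_gt0.
Qed.

Definition shannon (I : finType) (x : I -> R) : R := - \sum_i x i * log2 (x i).

Section ProbabilityVector.
Variables (I : finType) (x : I -> R).
Hypothesis x_ge0 : forall i, 0 <= x i.
Hypothesis sum_x : \sum_i x i = 1.

Lemma shannon_ln : shannon x * ln 2 = - \sum_i x i * ln (x i).
Proof.
rewrite /shannon /log2 mulNr mulr_suml; congr (- _); apply: eq_bigr => i _.
by rewrite -mulrA divfK // gt_eqF ?ln2_gt0.
Qed.

Lemma shannon_le_log2_support (k : nat) : (0 < k)%N ->
  (#|[pred i | x i != 0%R]| <= k)%N -> shannon x <= log2 k%:R.
Proof.
move=> k_gt0 supp_le; have kV_gt0 : 0 < (k%:R : R)^-1 by rewrite invr_gt0 ltr0n.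
rewrite /log2 ler_pdivlMr ?ln2_gt0 // shannon_ln.
have := ler_sum (index_enum I) (P := predT) (fun i _ => xlnx_gibbs_support (x_ge0 i) kV_gt0).
rewrite !sumrB -!mulr_suml sum_x mul1r lnV ?posrE ?ltr0n //.
have -> : \sum_i ((x i != 0)%:R : R) = #|[pred i | x i != 0%R]|%:R.
  by rewrite -sumr_const [RHS]big_mkcond; apply: eq_bigr => i _; rewrite inE; case: (x i != 0).
have : #|[pred i | x i != 0%R]|%:R / (k%:R : R) <= 1.
  by rewrite ler_pdivrMr ?ltr0n // mul1r ler_nat.
lra.
Qed.

Lemma uniform_of_shannon_ge_log2 :
  log2 #|I|%:R <= shannon x -> forall i, x i = #|I|%:R^-1.
Proof.
have n_gt0 : 0 < (#|I|%:R : R).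
  rewrite ltr0n lt0n; apply: contraPneq sum_x => /card0_eq I0.
  by rewrite big_pred0 // => /esym/eqP; rewrite oner_eq0.
set y := (#|I|%:R : R)^-1; have y_gt0 : 0 < y by rewrite invr_gt0.
rewrite /log2 ler_pdivrMr ?ln2_gt0 // shannon_ln => ge_log.
have lhsE : \sum_(i | predT i) (x i * ln y - x i * ln (x i)) =
             - \sum_i x i * ln (x i) - ln #|I|%:R.
  by rewrite sumrB -mulr_suml sum_x mul1r lnV ?posrE // addrC.
have rhsE : \sum_(i | predT i) (y - x i) = 0.
  by rewrite sumrB sum_x sumr_const -mulr_natl mulfV ?gt_eqF // subrr.
have [] := leif_sum (P := predT) (fun i _ => xlnx_gibbs (x_ge0 i) y_gt0).
rewrite lhsE rhsE => le_sum eq_sum.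
have : [forall (i | predT i), x i == y] by rewrite -eq_sum eq_le le_sum /=; lra.
by move=> /forall_inP all_eq i; apply/eqP/all_eq.
Qed.

Lemma shannon_const_on_support (y : R) :
  (forall i, x i = 0 \/ x i = y) -> shannon x = - log2 y.
Proof.
move=> x_0y; rewrite /shannon (eq_bigr (fun i => x i * log2 y)).
  by rewrite -mulr_suml sum_x mul1r.
by move=> i _; case: (x_0y i) => ->; rewrite ?mul0r.
Qed.

End ProbabilityVector.

Lemma log2_natM (m n : nat) : (0 < m)%N -> (0 < n)%N ->
  log2 (m * n)%:R = log2 m%:R + log2 n%:R :> R.
Proof. by move=> m_gt0 n_gt0; rewrite /log2 natrM lnM ?posrE ?ltr0n // mulrDl. Qed.

End ShannonEntropy.

Lemma char_poly_conj (F : fieldType) n (P A : 'M[F]_n) : P \in unitmx ->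
  char_poly (invmx P *m A *m P) = char_poly A.
Proof.
move=> P_unit; rewrite /char_poly /char_poly_mx.
have -> : 'X%:M - map_mx polyC (invmx P *m A *m P) =
    map_mx polyC (invmx P) *m ('X%:M - map_mx polyC A) *m map_mx polyC P.
  rewrite !map_mxM mulmxBr mulmxBl -!mulmxA; congr (_ - _).
  by rewrite mul_scalar_mx -scalemxAr -map_mxM mulVmx // map_mx1 scalemx1.
rewrite !det_mulmx !det_map_mx mulrC mulrA -rmorphM -det_mulmx mulmxV //.
by rewrite det1 mul1r.
Qed.

Lemma card_diag_support_le_rank (F : fieldType) n (d : 'rV[F]_n) :
  (#|[pred i | d 0%R i != 0%R]| <= \rank (diag_mx d))%N.
Proof.
set S := [pred i | d 0%R i != 0%R]; pose f (j : 'I_#|S|) := enum_val j.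
pose B := rowsub f (1%:M : 'M[F]_n).
have diag_sub : B *m diag_mx d *m B^T = diag_mx (\row_j d 0 (f j)).
  apply/matrixP => j j'; rewrite -[_ *m B^T]trmxK trmx_mul trmxK /B -!rowsubE !mxE.
  by rewrite (inj_eq enum_val_inj); case: eqP => [->|].
have sub_unit : diag_mx (\row_j d 0 (f j)) \in unitmx.
  rewrite unitmxE det_diag unitfE; apply/prodf_neq0 => j _.
  by rewrite mxE; have := enum_valP j; rewrite inE.
have := mxrank_unit sub_unit; rewrite -diag_sub => <-.
exact: leq_trans (mxrankM_maxl _ _) (mxrankM_maxr _ _).
Qed.

Section NormalMatrix.
Variable R : realType.
Local Notation C := R[i].

Definition psdmx n (A : 'M[C]_n) := forall v : 'rV_n, 0 <= (v *m A *m v^t*) 0 0.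

Variables (n : nat) (A : 'M[C]_n).
Hypothesis A_normal : A \is normalmx.
Local Notation P := (spectralmx A).
Local Notation sp := (spectral_diag A).

Lemma spectral_diagE : diag_mx sp = P *m A *m P^t*.
Proof.
have P_unit : P \in unitmx by exact: spectral_unit.
rewrite -invmx_unitary ?spectral_unitarymx // [X in _ = _ *m X *m _](orthomx_spectralP A_normal).
by rewrite !mulmxA mulmxV // mul1mx mulmxK.
Qed.

Lemma eigenvalues_spectral : perm_eq (eigenvalues A) [seq sp 0 i | i <- enum 'I_n].
Proof.
rewrite /eigenvalues; case: closed_field_poly_normal => rs /=.
rewrite (monicP (char_poly_monic A)) scale1r => char_rs.
apply: prod_XsubC_eq; rewrite -char_rs {1}(orthomx_spectralP A_normal).
rewrite char_poly_conj ?spectral_unit // char_poly_trig ?diag_mx_is_trig //.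
by rewrite big_map big_enum; apply: eq_bigr => i _; rewrite mxE eqxx mulr1n.
Qed.

Lemma spectral_diag_ge0 i : psdmx A -> 0 <= sp 0 i.
Proof.
move=> /(_ (row i P)); congr (_ <= _).
have /matrixP/(_ i i) := spectral_diagE; rewrite mxE eqxx mulr1n => ->.
rewrite !mxE; apply: eq_bigr => k _; rewrite !mxE; congr (_ * _).
by apply: eq_bigr => j _; rewrite !mxE.
Qed.

Lemma sum_spectral_diag : \sum_i sp 0 i = \tr A.
Proof.
rewrite -mxtrace_diag spectral_diagE -invmx_unitary ?spectral_unitarymx //.
by rewrite mxtrace_mulC mulmxA mulVmx ?spectral_unit // mul1mx.
Qed.

Lemma card_spectral_support : (#|[pred i | sp 0%R i != 0%R]| <= \rank A)%N.
Proof.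
apply: leq_trans (card_diag_support_le_rank sp) _; rewrite spectral_diagE.
exact: leq_trans (mxrankM_maxl _ _) (mxrankM_maxr _ _).
Qed.

Lemma spectral_diag_const c : (forall i, sp 0 i = c) -> A = c%:M.
Proof.
move=> sp_c; rewrite {1}(orthomx_spectralP A_normal).
have -> : sp = const_mx c by apply/matrixP => i j; rewrite ord1 !mxE.
rewrite diag_const_mx mul_mx_scalar -scalemxAl.
by rewrite mulVmx ?spectral_unit // scalemx1.
Qed.

Lemma spectral_diag_proj c i : A *m A = c *: A -> sp 0 i = 0 \/ sp 0 i = c.
Proof.
move=> AA; have P_unit : P \in unitmx by exact: spectral_unit.
have : diag_mx sp *m diag_mx sp = c *: diag_mx sp.
  rewrite spectral_diagE -invmx_unitary ?spectral_unitarymx //.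
  by rewrite !mulmxA mulmxKV // -(mulmxA _ A A) AA -scalemxAr -scalemxAl.
rewrite mulmx_diag => /matrixP/(_ i i); rewrite !mxE eqxx !mulr1n.
by move/eqP; rewrite -subr_eq0 -mulrBl mulf_eq0 subr_eq0 => /orP[] /eqP; [right | left].
Qed.

End NormalMatrix.

Section DensityOperator.
Variable R : realType.
Local Notation C := R[i].

Lemma tr_mx_of (T : finType) (rho : op R T) : \tr (mx_of rho) = \sum_t rho t t.
Proof.
by rewrite /mxtrace -(sum_enum_val (fun t => rho t t)); apply: eq_bigr => i _; rewrite mxE.
Qed.

Lemma mx_of_inj (T : finType) : injective (@mx_of R T).
Proof.
move=> rho1 rho2 /matrixP eq_mx.
apply: functional_extensionality => t; apply: functional_extensionality => t'.
by have := eq_mx (enum_rank t) (enum_rank t'); rewrite !mxE !enum_rankK.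
Qed.

Lemma natrVC (n : nat) : ((n%:R^-1 : R)%:C)%C = n%:R^-1 :> C.
Proof. by rewrite fmorphV rmorph_nat. Qed.

Lemma mx_of_maxmixed (T : finType) : mx_of (maxmixed T) = (#|T|%:R^-1 : C)%:M.
Proof.
apply/matrixP => i j; rewrite !mxE /maxmixed (inj_eq enum_val_inj).
by case: eqP => _; rewrite ?mul1r ?mul0r.
Qed.

Section SpectrumOfState.
Variables (T : finType) (rho : op R T).
Local Notation M := (mx_of rho).
Local Notation x := (fun i => complex.Re (spectral_diag M 0 i)).
Hypothesis rho_normal : M \is normalmx.
Hypothesis rho_tr1 : \tr M = 1.

Lemma entropy_spectral : entropy rho = shannon x.
Proof.
rewrite /entropy (perm_big _ (eigenvalues_spectral rho_normal)) big_map big_enum.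
by congr (- _); apply: eq_bigr => i _; rewrite xlog2xE.
Qed.

Lemma sum_spectrum : \sum_i x i = 1.
Proof. by rewrite -raddf_sum sum_spectral_diag // rho_tr1. Qed.

Section PositiveState.
Hypothesis rho_psd : psdmx M.

Lemma spectrum_ge0 i : 0 <= x i.
Proof. by have := spectral_diag_ge0 rho_normal i rho_psd; rewrite lecE => /andP[]. Qed.

Lemma entropy_le_log2_rank (k : nat) : (0 < k)%N -> (\rank M <= k)%N ->
  entropy rho <= log2 k%:R.
Proof.
move=> k_gt0 rank_le; rewrite entropy_spectral.
apply: (shannon_le_log2_support spectrum_ge0 sum_spectrum k_gt0).
apply: leq_trans (leq_trans (card_spectral_support rho_normal) rank_le).
by apply/subset_leq_card/subsetP => i; rewrite !inE; apply: contra => /eqP ->.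
Qed.

Lemma maxmixed_of_entropy_ge_log2 : log2 #|T|%:R <= entropy rho -> rho = maxmixed T.
Proof.
rewrite entropy_spectral => ge_log.
have := uniform_of_shannon_ge_log2 spectrum_ge0 sum_spectrum.
rewrite card_ord => /(_ ge_log) x_uniform; apply: mx_of_inj; rewrite mx_of_maxmixed.
apply: spectral_diag_const => // i.
rewrite -natrVC -(x_uniform i) RRe_real // ger0_real //.
exact: spectral_diag_ge0.
Qed.

End PositiveState.

Lemma entropy_proj (b : nat) : (0 < b)%N -> M *m M = b%:R^-1 *: M ->
  entropy rho = log2 b%:R.
Proof.
move=> b_gt0 rho_proj; rewrite entropy_spectral.
rewrite (shannon_const_on_support sum_spectrum (y := b%:R^-1)).
  by rewrite /log2 lnV ?posrE ?ltr0n // mulNr opprK.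
move=> i; case: (spectral_diag_proj rho_normal i rho_proj) => ->; first by left.
by right; rewrite -natrVC.
Qed.

End SpectrumOfState.

Lemma entropy_maxmixed (T : finType) : (0 < #|T|)%N ->
  entropy (@maxmixed R T) = log2 #|T|%:R.
Proof.
move=> T_gt0; apply: entropy_proj; rewrite ?mx_of_maxmixed //.
- by apply/normalmxP; rewrite scalar_mxC.
- by rewrite mxtrace_scalar -[X in X = 1]mulr_natr mulVf // pnatr_eq0 -lt0n.
- by rewrite mul_scalar_mx.
Qed.

End DensityOperator.

Section PureState.
Variable R : realType.
Local Notation C := R[i].

Section Gram.
Variables (m n : nat) (W : 'M[C]_(m, n)).

Lemma gram_normal : W *m W^t* \is normalmx.
Proof. by apply/normalmxP; rewrite trmx_mul map_mxM trmxCK. Qed.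

Lemma gram_psd : psdmx (W *m W^t*).
Proof.
move=> v; have -> : v *m (W *m W^t*) *m v^t* = (v *m W) *m (v *m W)^t*.
  by rewrite trmx_mul map_mxM !mulmxA.
by rewrite mxE; apply: sumr_ge0 => j _; rewrite !mxE mul_conjC_ge0.
Qed.

Lemma rank_gram_le : (\rank (W *m W^t*) <= n)%N.
Proof. exact: leq_trans (mxrankM_maxl _ _) (rank_leq_col _). Qed.

Lemma gram_sqr (c : C) : W^t* *m W = c%:M ->
  (W *m W^t*) *m (W *m W^t*) = c *: (W *m W^t*).
Proof. by move=> WW; rewrite mulmxA -(mulmxA W) WW mul_mx_scalar scalemxAl. Qed.

End Gram.

Definition coef_mx (T K : finType) (psi : T * K -> C) : 'M[C]_(#|T|, #|K|) :=
  \matrix_(i, j) psi (enum_val i, enum_val j).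

Lemma mx_of_ptrace_pure (T K : finType) (psi : T * K -> C) :
  mx_of (ptrace (fun p q => psi p * (psi q)^*)) = coef_mx psi *m (coef_mx psi)^t*.
Proof.
apply/matrixP => i j; rewrite !mxE /ptrace -sum_enum_val.
by apply: eq_bigr => k _; rewrite !mxE.
Qed.

Lemma tr_ptrace (T K : finType) (rho : op R (T * K)%type) :
  \tr (mx_of (ptrace rho)) = \sum_p rho p p.
Proof. by rewrite tr_mx_of pair_bigA; apply: eq_bigr => -[]. Qed.

End PureState.

Section Choi.
Variable R : realType.
Local Notation C := R[i].
Variables (a b c d : nat) (U : 'I_c * 'I_d -> 'I_a * 'I_b -> C).
Hypotheses (a_gt0 : (0 < a)%N) (b_gt0 : (0 < b)%N).

Let a_neq0 : (a%:R : C) != 0. Proof. by rewrite pnatr_eq0 -lt0n. Qed.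
Let b_neq0 : (b%:R : C) != 0. Proof. by rewrite pnatr_eq0 -lt0n. Qed.

Let entry (x : 'I_a * 'I_b * 'I_c * 'I_d) : C :=
  let: (al, be, ga, de) := x in U (ga, de) (al, be).

Lemma choi_vecE x : choi_vec U x = (sqrtC a%:R)^-1 * (sqrtC b%:R)^-1 * entry x.
Proof.
case: x => [[[al be] ga] de]; rewrite /choi_vec /Phi /=.
set s := _ * _ ^-1; transitivity (\sum_al' (\sum_be' s * U (ga, de) (al', be') *
                                            (be == be')%:R) * (al == al')%:R).
  apply: eq_bigr => al' _; rewrite mulr_suml; apply: eq_bigr => be' _ /=; rewrite /s; ring.
by rewrite !sum_mul_delta.
Qed.

Lemma choiE : choi U = fun x y => (a * b)%:R^-1 * (entry x * (entry y)^*).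
Proof.
apply: functional_extensionality => x; apply: functional_extensionality => y.
have s_ge0 : 0 <= (sqrtC (a%:R : C))^-1 * (sqrtC (b%:R : C))^-1.
  by rewrite mulr_ge0 // invr_ge0 sqrtC_ge0 ler0n.
have sa_neq0 : sqrtC (a%:R : C) != 0 by rewrite sqrtC_eq0.
have sb_neq0 : sqrtC (b%:R : C) != 0 by rewrite sqrtC_eq0.
rewrite /choi !choi_vecE rmorphM /= (geC0_conj s_ge0) natrM.
by rewrite -[in RHS](sqrtCK (a%:R : C)) -[in RHS](sqrtCK (b%:R : C)); field; apply/andP.
Qed.

Hypotheses (c_gt0 : (0 < c)%N) (d_gt0 : (0 < d)%N).
Hypothesis dim_eq : (a * b = c * d)%N.
Hypothesis U_unitary : unitary U.

Let c_neq0 : (c%:R : C) != 0. Proof. by rewrite pnatr_eq0 -lt0n. Qed.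
Let d_neq0 : (d%:R : C) != 0. Proof. by rewrite pnatr_eq0 -lt0n. Qed.

Lemma unitary_cols t t' :
  \sum_ga \sum_de U (ga, de) t * (U (ga, de) t')^* = (t == t')%:R.
Proof.
rewrite pair_bigA eq_sym -(U_unitary.1 t' t).
by apply: eq_bigr => -[ga de] _; rewrite mulrC.
Qed.

Lemma unitary_rows k k' :
  \sum_al \sum_be U k (al, be) * (U k' (al, be))^* = (k == k')%:R.
Proof. by rewrite pair_bigA -(U_unitary.2 k k'); apply: eq_bigr => -[]. Qed.

Lemma rho_A_maxmixed : rho_A U = maxmixed 'I_a.
Proof.
apply: functional_extensionality => al; apply: functional_extensionality => al'.
rewrite /rho_A /ptrace /relabel choiE -mulr_sumr !sum_pair /=.
under eq_bigr => be _ do rewrite unitary_cols xpair_eqE eqxx andbT.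
by rewrite sumr_const /maxmixed !card_ord -[_ *+ b]mulr_natr natrM; field; apply/andP.
Qed.

Lemma rho_C_maxmixed : rho_C U = maxmixed 'I_c.
Proof.
apply: functional_extensionality => ga; apply: functional_extensionality => ga'.
rewrite /rho_C /ptrace /relabel choiE -mulr_sumr !sum_pair /=.
under eq_bigr => al _ do rewrite exchange_big /=.
rewrite exchange_big /=.
under eq_bigr => de _ do rewrite unitary_rows xpair_eqE eqxx andbT.
rewrite sumr_const /maxmixed !card_ord -[_ *+ d]mulr_natr dim_eq natrM.
by field; apply/andP.
Qed.

Lemma rho_D_maxmixed : rho_D U = maxmixed 'I_d.
Proof.
apply: functional_extensionality => de; apply: functional_extensionality => de'.
rewrite /rho_D /ptrace /relabel choiE -mulr_sumr !sum_pair /=.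
under eq_bigr => al _ do rewrite exchange_big /=.
rewrite exchange_big /=.
under eq_bigr => ga _ do rewrite unitary_rows xpair_eqE eqxx /=.
rewrite sumr_const /maxmixed !card_ord -[_ *+ c]mulr_natr dim_eq natrM.
by field; apply/andP.
Qed.

Lemma rho_CD_maxmixed : rho_CD U = maxmixed ('I_c * 'I_d)%type.
Proof.
apply: functional_extensionality => -[ga de]; apply: functional_extensionality => -[ga' de'].
rewrite /rho_CD /ptrace /relabel choiE -mulr_sumr !sum_pair /= unitary_rows.
by rewrite /maxmixed card_prod !card_ord -dim_eq mulrC.
Qed.

Lemma sum_choi_diag : \sum_x choi U x x = 1.
Proof.
rewrite choiE -mulr_sumr !sum_pair /=.
under eq_bigr => al _ do under eq_bigr => be _ do rewrite unitary_cols eqxx.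
rewrite !sumr_const !card_ord -mulrnA /= mulr1n [(b * a)%N]mulnC mulVf //.
by rewrite pnatr_eq0 muln_eq0 negb_or -!lt0n a_gt0.
Qed.

Section ReducedState.
Variables (X Y : finType) (f : X * Y -> 'I_a * 'I_b * 'I_c * 'I_d).
Local Notation M := (mx_of (ptrace (relabel f (choi U)))).
Local Notation W := (coef_mx (choi_vec U \o f)).

Lemma mx_of_reduced_choi : M = W *m W^t*.
Proof. exact: mx_of_ptrace_pure. Qed.

Lemma reduced_choi_normal : M \is normalmx.
Proof. by rewrite mx_of_reduced_choi gram_normal. Qed.

Lemma reduced_choi_psd : psdmx M.
Proof. by rewrite mx_of_reduced_choi; apply: gram_psd. Qed.

Lemma rank_reduced_choi : (\rank M <= #|Y|)%N.
Proof. by rewrite mx_of_reduced_choi rank_gram_le. Qed.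

Lemma tr_reduced_choi : bijective f -> \tr M = 1.
Proof.
move=> f_bij; rewrite tr_ptrace -sum_choi_diag [RHS](reindex f) //.
exact: onW_bij.
Qed.

End ReducedState.

Lemma tr_rho_AC : \tr (mx_of (rho_AC U)) = 1.
Proof.
apply: tr_reduced_choi.
by exists (fun '(al, be, ga, de) => ((al, ga), (be, de))) => [[[? ?] [? ?]] | [[[? ?] ?] ?]].
Qed.

Lemma tr_rho_AD : \tr (mx_of (rho_AD U)) = 1.
Proof.
apply: tr_reduced_choi.
by exists (fun '(al, be, ga, de) => ((al, de), (be, ga))) => [[[? ?] [? ?]] | [[[? ?] ?] ?]].
Qed.

Let f_ACD (p : 'I_a * ('I_c * 'I_d) * 'I_b) := let: (al, (ga, de), be) := p in (al, be, ga, de).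

Lemma tr_rho_ACD : \tr (mx_of (rho_ACD U)) = 1.
Proof.
apply: (tr_reduced_choi (f := f_ACD)).
by exists (fun '(al, be, ga, de) => ((al, (ga, de)), be)) => [[[? [? ?]] ?] | [[[? ?] ?] ?]].
Qed.

(* [W^t* *m W] is the transpose of the marginal [tau_B] of the Choi state, so that
   [rho_ACD = W *m W^t*] has the nonzero spectrum of [tau_B]. *)
Lemma gram_ACD : let W := coef_mx (choi_vec U \o f_ACD) in
  W^t* *m W = (b%:R^-1)%:M.
Proof.
apply/matrixP => i j; rewrite !mxE.
under eq_bigr => l _ do rewrite !mxE /= mulrC.
rewrite (sum_enum_val (fun x => choi U (f_ACD (x, enum_val j)) (f_ACD (x, enum_val i)))).
rewrite choiE -mulr_sumr sum_pair /=.
under eq_bigr => al _ do rewrite sum_pair /= unitary_cols xpair_eqE eqxx /=.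
rewrite sumr_const (card_ord a) (inj_eq enum_val_inj) eq_sym -[_ *+ a]mulr_natr natrM.
by case: (i == j); rewrite ?mulr1n ?mulr0n ?mul0r ?mulr0 //; field; apply/andP.
Qed.

Lemma entropy_rho_ACD : entropy (rho_ACD U) = log2 b%:R.
Proof.
apply: (entropy_proj (reduced_choi_normal f_ACD) tr_rho_ACD b_gt0).
by rewrite mx_of_reduced_choi; apply/gram_sqr/gram_ACD.
Qed.

Lemma entropy_rho_AC_le : entropy (rho_AC U) <= log2 a%:R + log2 c%:R.
Proof.
rewrite -log2_natM //.
apply: (entropy_le_log2_rank (reduced_choi_normal _) tr_rho_AC (reduced_choi_psd _)).
  by rewrite muln_gt0 a_gt0.
by apply: leq_trans (rank_leq_row _) _; rewrite card_prod !card_ord.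
Qed.

Lemma entropy_rho_AD_le : entropy (rho_AD U) <= log2 a%:R + log2 d%:R.
Proof.
rewrite -log2_natM //.
apply: (entropy_le_log2_rank (reduced_choi_normal _) tr_rho_AD (reduced_choi_psd _)).
  by rewrite muln_gt0 a_gt0.
by apply: leq_trans (rank_leq_row _) _; rewrite card_prod !card_ord.
Qed.

Lemma entropy_rho_AD_le_BC : entropy (rho_AD U) <= log2 b%:R + log2 c%:R.
Proof.
rewrite -log2_natM //.
apply: (entropy_le_log2_rank (reduced_choi_normal _) tr_rho_AD (reduced_choi_psd _)).
  by rewrite muln_gt0 b_gt0.
by apply: leq_trans (rank_reduced_choi _) _; rewrite card_prod !card_ord.
Qed.

Lemma I3_choi : I3 U = log2 a%:R + log2 b%:R - entropy (rho_AC U) - entropy (rho_AD U).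
Proof.
rewrite /I3 /I_AC /I_AD /I_ACD entropy_rho_ACD rho_A_maxmixed rho_C_maxmixed.
rewrite rho_D_maxmixed rho_CD_maxmixed !entropy_maxmixed ?card_prod ?card_ord ?muln_gt0 ?c_gt0 //.
rewrite log2_natM //; lra.
Qed.

Lemma rho_AC_maxmixed_of_entropy : log2 a%:R + log2 c%:R <= entropy (rho_AC U) ->
  rho_AC U = maxmixed ('I_a * 'I_c)%type.
Proof.
move=> ge_log.
apply: (maxmixed_of_entropy_ge_log2 (reduced_choi_normal _) tr_rho_AC (reduced_choi_psd _)).
by rewrite card_prod !card_ord log2_natM.
Qed.

Lemma entropy_rho_AC_ge_of_I3 :
  I3 U = - 2 * log2 (minn (minn a b) (minn c d))%:R ->
  (a = minn (minn a b) (minn c d) \/ c = minn (minn a b) (minn c d)) ->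
  log2 a%:R + log2 c%:R <= entropy (rho_AC U).
Proof.
rewrite I3_choi => I3_max min_AC.
have log_dim : log2 a%:R + log2 b%:R = log2 c%:R + log2 d%:R :> R.
  by rewrite -!log2_natM // dim_eq.
have := entropy_rho_AD_le; have := entropy_rho_AD_le_BC.
by case: min_AC => min_eq; rewrite -min_eq in I3_max; lra.
Qed.

Lemma residual_channelE (sigma : op R 'I_a) ga ga' :
  residual_channel U sigma ga ga' =
  a%:R * \sum_al \sum_al' sigma al al' * rho_AC U (al, ga) (al', ga').
Proof.
pose G al al' be de := sigma al al' * (U (ga, de) (al, be) * (U (ga', de) (al', be))^*).
transitivity (b%:R^-1 * \sum_de \sum_al \sum_be \sum_al' G al al' be de).
  rewrite mulr_sumr /residual_channel /ptrace /conj_by /tensor_op /maxmixed card_ord.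
  apply: eq_bigr => de _; rewrite sum_pair mulr_sumr; apply: eq_bigr => al _.
  rewrite mulr_sumr; apply: eq_bigr => be _; rewrite sum_pair mulr_sumr.
  apply: eq_bigr => al' _ /=.
  rewrite -[RHS](sum_mul_delta be (fun be' => b%:R^-1 * G al al' be' de)).
  apply: eq_bigr => be' _.
  by rewrite /G; case: eqP => [->|_] /=; rewrite ?mulr1n ?mulr0n; ring.
rewrite exchange_big /=; under eq_bigr => al _ do rewrite exchange_big /=.
under eq_bigr => al _ do under eq_bigr => be _ do rewrite exchange_big /=.
under eq_bigr => al _ do rewrite exchange_big /=.
rewrite mulr_sumr [RHS]mulr_sumr; apply: eq_bigr => al _.
rewrite mulr_sumr [RHS]mulr_sumr; apply: eq_bigr => al' _.
rewrite /rho_AC /ptrace /relabel choiE -mulr_sumr sum_pair /= /G.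
under eq_bigr => be _ do rewrite -mulr_sumr.
by rewrite -mulr_sumr natrM; field; apply/andP.
Qed.

Lemma residual_channel_maxmixed (sigma : op R 'I_a) :
  rho_AC U = maxmixed ('I_a * 'I_c)%type -> density sigma ->
  residual_channel U sigma = maxmixed 'I_c.
Proof.
move=> rho_AC_mixed [_ tr_sigma].
apply: functional_extensionality => ga; apply: functional_extensionality => ga'.
rewrite residual_channelE rho_AC_mixed /maxmixed card_prod !card_ord.
transitivity (a%:R * \sum_al \sum_al'
                sigma al al' * ((ga == ga')%:R / (a * c)%:R) * (al == al')%:R).
  congr (_ * _); apply: eq_bigr => al _; apply: eq_bigr => al' _; rewrite xpair_eqE.
  by case: (al == al'); case: (ga == ga'); rewrite /= ?mulr1n ?mulr0n; ring.
under eq_bigr => al _ do rewrite sum_mul_delta.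
by rewrite -mulr_suml tr_sigma mul1r natrM; field; apply/andP.
Qed.

Lemma I_AC_maxmixed : rho_AC U = maxmixed ('I_a * 'I_c)%type -> I_AC U = 0.
Proof.
move=> rho_AC_mixed; rewrite /I_AC rho_AC_mixed rho_A_maxmixed rho_C_maxmixed.
by rewrite !entropy_maxmixed ?card_prod ?card_ord ?muln_gt0 ?a_gt0 // log2_natM // subrr.
Qed.

End Choi.

Theorem proposition5 (R : realType) (a b c d : nat)
    (U : ('I_c * 'I_d) -> ('I_a * 'I_b) -> R[i]) :
  (0 < a)%N -> (0 < b)%N -> (0 < c)%N -> (0 < d)%N ->
  (a * b = c * d)%N ->
  unitary U ->
  I3 U = - 2 * log2 (minn (minn a b) (minn c d))%:R ->
  (a = minn (minn a b) (minn c d) \/ c = minn (minn a b) (minn c d)) ->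
  [/\ rho_AC U = maxmixed ('I_a * 'I_c)%type,
      I_AC U = 0 &
      forall sigma : op R 'I_a, density sigma ->
        residual_channel U sigma = maxmixed 'I_c].
Proof.
move=> a_gt0 b_gt0 c_gt0 d_gt0 dim_eq U_unitary I3_max min_AC.
have rho_AC_mixed : rho_AC U = maxmixed ('I_a * 'I_c)%type.
  apply: rho_AC_maxmixed_of_entropy => //.
  exact: entropy_rho_AC_ge_of_I3.
split; first exact: rho_AC_mixed.
- exact: I_AC_maxmixed.
- by move=> sigma; apply: residual_channel_maxmixed.
Qed.
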